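(* Let $m\ge2$ and let $A(\mathbf z)$, $\mathbf z=(z_1,\dots,z_m)$, be the $(2m+1)\times(2m+1)$ matrix whose rows and columns are indexed, in this order, by $s_0,s_1,\dots,s_m,s_1^{-1},\dots,s_m^{-1}$, with entries: column $s_0$ is zero; row $s_0$ has entry $z_j$ in columns $s_j$ and $s_j^{-1}$ ($1\le j\le m$); row $s_i$ ($1\le i\le m$) has entry $z_j$ in column $s_j$ for all $j$, entry $z_j$ in column $s_j^{-1}$ for $j\ne i$, and $0$ in column $s_i^{-1}$; row $s_i^{-1}$ has entry $z_j$ in column $s_j^{-1}$ for all $j$, entry $z_j$ in column $s_j$ for $j\ne i$, and $0$ in column $s_i$. For $1\le i\le 2m+1$ let $(I-A(\mathbf z):i,1)$ denote the matrix obtained from $I-A(\mathbf z)$ by deleting its $i$-th row and first column. Then $$\sum_{i=1}^{2m+1}(-1)^{i+1}\det\big(I-A(\mathbf z):i,1\big)=(1-z_1^2)\cdots(1-z_m^2).$$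
   Context: $I$ is the $(2m+1)\times(2m+1)$ identity matrix; the identity is between polynomials in $z_1,\dots,z_m$. *)

From HB Require Import structures.
From mathcomp Require Import all_boot all_order all_algebra.
From mathcomp Require Import mpoly.
Set Implicit Arguments. Unset Strict Implicit. Unset Printing Implicit Defensive.
Import GRing.Theory.
Local Open Scope ring_scope.

(* Index k of 'I_(2m+1) (0-based) encodes the generator:
   k = 0        -> s_0            (None)
   1 <= k <= m  -> s_(k-1+1)      (Some (true,  k-1))   (0-based j = k-1)
   m < k <= 2m  -> s_(k-m)^{-1}   (Some (false, k-m-1)) *)
Definition gen_kind (m k : nat) : option (bool * nat) :=
  if k == 0%N then None
  else if (k <= m)%N then Some (true, (k - 1)%N) else Some (false, (k - m - 1)%N).

(* Entry of A(z) at row r, column c; z is indexed 0..m-1 (z_(j+1) = z j). *)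
Definition A_entry (R : nzRingType) (m : nat) (z : nat -> R) (r c : nat) : R :=
  match gen_kind m c with
  | None => 0
  | Some (bc, j) =>
      match gen_kind m r with
      | None => z j
      | Some (br, i) => if (br == bc) then z j else if i == j then 0 else z j
      end
  end.

Definition Amat (R : nzRingType) (m : nat) (z : nat -> R) : 'M[R]_((2 * m).+1) :=
  \matrix_(r, c) A_entry m z r c.

(* The variables z_1..z_m as elements of the polynomial ring {mpoly R[m]},
   indexed 0..m-1 (and 0 out of range, never used). *)
Definition Zvar (R : nzRingType) (m : nat) (j : nat) : {mpoly R[m]} :=
  if insub j is Some i then 'X_i else 0.

From HB Require Import structures.
From mathcomp Require Import all_boot all_order all_algebra.
From mathcomp Require Import mpoly.
Import GRing.Theory.
Local Open Scope ring_scope.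

(* Expanding along the first column, the alternating sum is the determinant of
   I - A(z) with its first column replaced by ones; subtracting the first row
   from the others reduces it to the Schur complement, with entries
   delta_ij - A_ij + A_0j (i, j >= 1).  Row s_0 of A agrees with row s_i except
   in column s_i^{-1}, where it has z_i instead of 0, and symmetrically for row
   s_i^{-1}; so the complement is [[I, Z], [Z, I]] with Z = diag(z), whose
   determinant is det (I - Z^2). *)

Lemma det_castmx (R : comNzRingType) n1 n2 (e : n1 = n2) (A : 'M[R]_n1) :
  \det (castmx (e, e) A) = \det A.
Proof. by case: n2 / e; rewrite castmx_id. Qed.

Lemma det_block_mx1l (R : comNzRingType) p q
    (B : 'M[R]_(p, q)) (C : 'M[R]_(q, p)) (D : 'M[R]_q) :
  \det (block_mx 1%:M B C D) = \det (D - C *m B).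
Proof.
have -> : block_mx 1%:M B C D
          = block_mx 1%:M 0 C 1%:M *m block_mx 1%:M B 0 (D - C *m B).
  by rewrite mulmx_block !mul1mx !mulmx1 !mul0mx !addr0 addrC subrK.
by rewrite det_mulmx det_lblock det_ublock !det1 !mul1r.
Qed.

Lemma sum_col0_minors (R : comNzRingType) n (M : 'M[R]_n.+1) :
  \sum_(i < n.+1) (-1) ^+ i * \det (row' i (col' ord0 M))
  = \det (\matrix_(i, j) (M (lift ord0 i) (lift ord0 j) - M ord0 (lift ord0 j))).
Proof.
pose B : 'M[R]_(1 + n) := \matrix_(i, j) if j == ord0 then 1 else M i j.
have -> : \sum_(i < n.+1) (-1) ^+ i * \det (row' i (col' ord0 M)) = \det B.
  rewrite (expand_det_col B ord0); apply: eq_bigr => i _.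
  rewrite /cofactor mxE eqxx mul1r addn0; congr (_ * \det (row' _ _)).
  by apply/matrixP => a b; rewrite !mxE.
have B00 : ulsubmx B = 1%:M by apply/matrixP => i j; rewrite !ord1 !mxE.
rewrite -[B]submxK B00 det_block_mx1l; congr (\det _); apply/matrixP => i j.
rewrite !mxE big_ord1 /B !mxE /= mul1r.
by congr (M _ _ - M _ _); apply: val_inj.
Qed.

Section Amat.
Variables (P : comNzRingType) (m : nat) (z : nat -> P).
Local Notation Z := (diag_mx (\row_(j < m) z j)).

Lemma gen_kind_lshift (i : 'I_m) : gen_kind m (lshift m i).+1 = Some (true, val i).
Proof. by rewrite /gen_kind /= ltn_ord subn1. Qed.

Lemma gen_kind_rshift (i : 'I_m) : gen_kind m (rshift m i).+1 = Some (false, val i).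
Proof. by rewrite /gen_kind /= ltnNge leq_addr /= subn1 -addnS addKn. Qed.

Lemma A_entry_row0_sub (i j : 'I_(m + m)) :
  A_entry m z 0 j.+1 - A_entry m z i.+1 j.+1 = block_mx 0 Z Z 0 i j.
Proof.
case: (split_ordP i) => {}i ->; case: (split_ordP j) => {}j ->;
  rewrite ?block_mxEul ?block_mxEur ?block_mxEdl ?block_mxEdr /A_entry
          ?gen_kind_lshift ?gen_kind_rshift /= ?subrr ?mxE //.
all: by rewrite val_eqE; case: eqP => [->|_]; rewrite ?subr0 ?subrr.
Qed.

Let mul2n_addnn : (2 * m = m + m)%N. Proof. by rewrite mul2n addnn. Qed.

Lemma Amat_col0_schur :
  castmx (mul2n_addnn, mul2n_addnn)
    (\matrix_(i, j) ((1%:M - Amat m z) (lift ord0 i) (lift ord0 j)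
                     - (1%:M - Amat m z) ord0 (lift ord0 j)))
  = block_mx 1%:M Z Z 1%:M.
Proof.
have -> : block_mx 1%:M Z Z 1%:M = 1%:M + block_mx 0 Z Z 0.
  by rewrite (scalar_mx_block m m) add_block_mx !addr0 !add0r.
apply/matrixP => i j; rewrite castmxE [RHS]mxE -A_entry_row0_sub !mxE.
rewrite (inj_eq lift_inj) (inj_eq (@cast_ord_inj _ _ _)).
by rewrite (negbTE (neq_lift _ _)) !lift0 /= sub0r opprK addrA addrAC.
Qed.

Lemma Amat_col0_minors_sum :
  \sum_(i < (2 * m).+1) (-1) ^+ i * \det (row' i (col' ord0 (1%:M - Amat m z)))
  = \prod_(j < m) (1 - z j ^+ 2).
Proof.
rewrite sum_col0_minors -(@det_castmx _ _ _ mul2n_addnn) Amat_col0_schur.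
rewrite det_block_mx1l mulmx_diag -diag_const_mx -raddfB det_diag.
by apply: eq_bigr => j _; rewrite !mxE expr2.
Qed.

End Amat.

Theorem lemma2 (R : comNzRingType) (m : nat) (hm : (2 <= m)%N) :
  \sum_(i < (2 * m).+1)
     (-1) ^+ i * \det (row' i (col' ord0 (1%:M - Amat m (@Zvar R m))))
  = \prod_(j < m) (1 - 'X_j ^+ 2 : {mpoly R[m]}).
Proof.
rewrite Amat_col0_minors_sum; apply: eq_bigr => j _.
by rewrite /Zvar valK.
Qed.
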